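(* Let $\mathcal X$ be a finite set, $f:\mathcal X\to\mathbb R$ with $\min_{x\in\mathcal X}f(x)=0$, $\mu$ a probability measure on $\mathcal X$, $\mathcal N(x)\subseteq\mathcal X$ neighborhoods, $\mathcal Df$ a fixed deterministic choice $\mathcal Df(x)\in\arg\min_{y\in\mathcal N(x)}f(y)$, and $\epsilon\in f(\mathcal X)$ with $\epsilon<\max_{\mathcal X}f$. Let $q(\cdot)$, $p_2(\cdot)$, $a$ be the quantities defined in the context for the algorithm $\mathcal G_1=\mathcal G_{1,\mathcal X\setminus\mathcal F(\mathcal Df)}$. If $$\sum_{j=0}^a\frac{p_2(j)}{(1-q(0))^{j+1}}\ge1,$$ then $$\sup_{p\in[0,1)}\xi_{\rm crit}(\mathcal G_{p,\mathcal X})\ \ge\ \xi_{\rm crit}(\mathcal G_1),$$ i.e. some algorithm of the class $\mathcal A_2=\{\mathcal G_{p,\mathcal X}:p\in[0,1)\}$ has asymptotic convergence exponent at least that of $\mathcal G_1$.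
   Context: Setting. For $p\in[0,1]$ and $A\subseteq\mathcal X$, the algorithm $\mathcal G_{p,A}$ is the Markov chain on $\mathcal X$ with generator $[\mathcal G\phi](x)=p\mathbf 1_A(x)\phi(\mathcal Df(x))+(1-p\mathbf 1_A(x))\mathbf E^\mu[\phi]-\phi(x)$: from $x\in A$ it moves to $\mathcal Df(x)$ with probability $p$ and otherwise jumps to a $\mu$-distributed point; from $x\notin A$ it jumps to a $\mu$-distributed point. Write $\mathcal D^kf$ for the $k$-fold iterate of $\mathcal Df$. Let $\mathcal L(\epsilon)=f^{-1}([0,\epsilon])$, $B(\epsilon)=\mathcal X\setminus\mathcal L(\epsilon)$, $\mathcal W(S)=\{x:\lim_{k\to\infty}\mathcal D^kf(x)\in S\}$, $\Gamma(\epsilon)=\mathcal X\setminus\mathcal W(\mathcal L(\epsilon))$, $\mathcal F(\mathcal Df)=\{x:\mathcal Df(x)=x\}$. For a given $A$: $d(x)=\min\{k\ge0:\mathcal D^kf(x)\in\mathcal F(\mathcal Df)\cup\mathcal L(\epsilon)\cup(\mathcal X\setminus A)\}$; $q(j)=\mu(\mathcal W(\mathcal L(\epsilon))\cap d^{-1}(j))$; $p_1(j)=\mu(\Gamma(\epsilon)\cap d^{-1}(j)\cap(\mathcal D^jf)^{-1}(A))$; $p_2(j)=\mu(\Gamma(\epsilon)\cap d^{-1}(j)\cap(\mathcal D^jf)^{-1}(\mathcal X\setminus A))$; $a=\max\{j:p_1(j)\vee p_2(j)>0\}$, $b=\max\{j:q(j)>0\}$; $\mathcal X_3=\{x:\mathcal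 D^{d(x)}f(x)\in A\cap B(\epsilon)\}$. Define $$Q(\xi,p)=1-\frac{(1-p)e^\xi}{1-pe^\xi}\sum_{j=0}^a p_1(j)-e^\xi\sum_{j=0}^a p_2(j)p^je^{j\xi}-(1-p)e^\xi\sum_{j=0}^{a\vee b}(q(j)+p_2(j))\sum_{i=0}^{j-1}p^ie^{i\xi},$$ with empty sums equal to $0$. It is known that if $\mathcal X_3=\emptyset$ then $Q(\cdot,p)$ has a unique positive root for every $p\in[0,1]$, and if $\mathcal X_3\neq\emptyset$ then $Q(\cdot,p)$ has a unique root in $(0,-\log p)$ for every $p\in[0,1)$ (with $-\log0=\infty$); this root is the critical exponent $\xi_{\rm crit}(\mathcal G_{p,A})$. In particular $\xi_{\rm crit}(\mathcal G_1)$ is the positive root of $1-e^\xi\sum_{j=0}^ap_2(j)e^{j\xi}=0$ (quantities for $A=\mathcal X\setminus\mathcal F(\mathcal Df)$), and for $p\in[0,1)$, $\xi_{\rm crit}(\mathcal G_{p,\mathcal X})$ is the root in $(0,-\log p)$ of $1-e^\xi+(1-p)e^\xi\sum_{j=0}^bq(j)p^je^{j\xi}=0$ (quantities for $A=\mathcal X$). For both choices of $A$, $d(x)=\min\{k\ge0:\mathcal D^kf(x)\in\mathcal F(\mathcal Df)\cup\mathcal L(\epsilon)\}$, so $q(\cdot)$ and $b$ are the same. *)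

From HB Require Import structures.
From mathcomp Require Import all_boot all_order all_algebra.
From mathcomp Require Import all_classical all_reals all_analysis.

Set Implicit Arguments.
Unset Strict Implicit.
Unset Printing Implicit Defensive.

Import Order.TTheory GRing.Theory Num.Theory.
Local Open Scope ring_scope.

Section CritDefs.
Variables (R : realType) (X : finType) (f : X -> R) (mu : X -> R)
  (Df : X -> X) (eps : R).

(* L(eps) = f^{-1}([0,eps]) (f >= 0 is a standing hypothesis), B(eps) its complement *)
Definition Lset : {set X} := finset (fun x => f x <= eps).
Definition Bset : {set X} := ~: Lset.
Definition Fix : {set X} := finset (fun x => Df x == x).
(* W(S) = {x : lim_k Df^k x in S}; on the finite (discrete) space X the limit
   exists iff the orbit is eventually constant, and is that constant value. *)
Definition Wset (S : {set X}) : {set X} :=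
  finset (fun x => `[< exists y, y \in S /\
            exists K, forall k, (K <= k)%N -> iter k Df x = y >]).
Definition Gamma : {set X} := ~: Wset Lset.
Definition Stop (A : {set X}) : {set X} := Fix :|: Lset :|: ~: A.
(* d^{-1}(j) = {x : d(x) = j} *)
Definition dlevel (A : {set X}) (j : nat) : {set X} :=
  finset (fun x => (iter j Df x \in Stop A) &&
                   [forall i : 'I_j, iter i Df x \notin Stop A]).
Definition meas (S : {set X}) : R := \sum_(x in S) mu x.

Definition qq (A : {set X}) (j : nat) : R := meas (Wset Lset :&: dlevel A j).
Definition p1 (A : {set X}) (j : nat) : R :=
  meas (Gamma :&: dlevel A j :&: finset (fun x => iter j Df x \in A)).
Definition p2 (A : {set X}) (j : nat) : R :=
  meas (Gamma :&: dlevel A j :&: finset (fun x => iter j Df x \notin A)).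

(* a = max{j : p1(j) v p2(j) > 0}, b = max{j : q(j) > 0}; since d(x) < #|X|
   whenever d(x) is defined, the max can be taken over j <= #|X|
   (0 if the set is empty, in which case all sums below vanish anyway). *)
Definition a_idx (A : {set X}) : nat :=
  (\max_(j < #|X|.+1 | ((0 < p1 A j)%R || (0 < p2 A j)%R)) (j : nat))%N.
Definition b_idx (A : {set X}) : nat :=
  (\max_(j < #|X|.+1 | (0 < qq A j)%R) (j : nat))%N.

Definition X3 (A : {set X}) : {set X} :=
  finset (fun x => `[< exists j, x \in dlevel A j /\
                          iter j Df x \in A :&: Bset >]).

Definition Qfun (A : {set X}) (p xi : R) : R :=
  1 - (1 - p) * expR xi / (1 - p * expR xi) * \sum_(0 <= j < (a_idx A).+1) p1 A j
    - expR xi * \sum_(0 <= j < (a_idx A).+1) p2 A j * p ^+ j * expR (j%:R * xi)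
    - (1 - p) * expR xi *
        \sum_(0 <= j < (maxn (a_idx A) (b_idx A)).+1)
           (qq A j + p2 A j) * \sum_(0 <= i < j) p ^+ i * expR (i%:R * xi).

(* critical exponent of G_{p,A}: the (unique, by the known result) root of Q(.,p)
   which is positive if X_3 is empty, and lies in (0, -log p) otherwise
   (-log 0 = +oo). *)
Definition xi_crit (A : {set X}) (p : R) : R :=
  if X3 A == finset.set0 then xget 0 (fun xi => 0 < xi /\ Qfun A p xi = 0)
  else xget 0 (fun xi => 0 < xi /\ (p = 0 \/ xi < - ln p) /\ Qfun A p xi = 0).

End CritDefs.

From HB Require Import structures.
From mathcomp Require Import all_boot all_order all_algebra.
From mathcomp Require Import all_classical all_reals all_analysis.
From mathcomp Require Import lra.
Import Order.TTheory GRing.Theory Num.Theory.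

Set Implicit Arguments.
Unset Strict Implicit.
Unset Printing Implicit Defensive.

Local Open Scope ring_scope.

(* It suffices to compare with p = 0. For A = X the quantities p2 vanish, so
   Q(xi, 0) = 1 - e^xi s with s = sum_j p1(j) + sum_(j >= 1) q(j), and
   xi_crit(G_{0,X}) = - ln s.  The levels d^-1(j) are disjoint, whence
   s + q(0) <= 1.  On the other side e = exp xi_crit(G_1) solves
   sum_j p2(j) e^(j+1) = 1.  If e (1 - q(0)) > 1, each term p2(j) / (1 - q(0))^(j+1)
   of the hypothesis would be at most p2(j) e^(j+1) / (e (1 - q(0))), so that sum
   would be < 1.  Hence e <= 1 / (1 - q(0)) <= 1 / s. *)

Lemma power_sums_mul_le1 (R : realFieldType) (n : nat) (c : nat -> R) (e d : R) :
  (forall j, 0 <= c j) -> 0 < e -> 0 < d ->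
  \sum_(0 <= j < n) c j * e ^+ j.+1 = 1 ->
  1 <= \sum_(0 <= j < n) c j / d ^+ j.+1 -> e * d <= 1.
Proof.
move=> c_ge0 e_gt0 d_gt0 ce_eq1 cd_ge1; rewrite leNgt; apply/negP => ed_gt1.
have ed_gt0 : 0 < e * d by rewrite mulr_gt0.
suff cd_le : \sum_(0 <= j < n) c j / d ^+ j.+1 <= (e * d)^-1.
  by have := le_trans cd_ge1 cd_le; rewrite invf_ge1 // leNgt ed_gt1.
rewrite -[(e * d)^-1]mul1r -ce_eq1 mulr_suml; apply: ler_sum_nat => j _.
rewrite -mulrA; apply: ler_wpM2l => //.
have -> : (d ^+ j.+1)^-1 = e ^+ j.+1 / (e * d) ^+ j.+1.
  by rewrite exprMn invfM mulrA mulfV ?mul1r // expf_neq0 // gt_eqF.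
apply: ler_wpM2l; first by rewrite exprn_ge0 // ltW.
rewrite lef_pV2 ?posrE ?exprn_gt0 //.
by rewrite exprS ler_peMr ?exprn_ege1 ?ltW.
Qed.

Lemma sum_expr0 (R : pzSemiRingType) (F : nat -> R) (n : nat) :
  \sum_(0 <= i < n) 0 ^+ i * F i = (0 < n)%:R * F 0%N.
Proof.
case: n => [|n]; first by rewrite big_geq ?mul0r.
rewrite big_nat_recl // big1 ?addr0 ?expr0 ?mul1r // => i _.
by rewrite exprS !mul0r.
Qed.

Section Measure.
Variables (R : realType) (X : finType) (mu : X -> R).
Hypothesis mu_ge0 : forall x, 0 <= mu x.

Lemma meas_ge0 (S : {set X}) : 0 <= meas mu S.
Proof. exact: sumr_ge0. Qed.

Lemma measID (S T : {set X}) : meas mu (S :&: T) + meas mu (S :\: T) = meas mu S.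
Proof. by rewrite /meas [RHS](big_setID T). Qed.

Lemma le_meas (S T : {set X}) : S \subset T -> meas mu S <= meas mu T.
Proof.
by move=> /finset.setIidPr ST; rewrite -(measID T S) ST lerDl meas_ge0.
Qed.

Lemma sum_meas_disjoint (I : finType) (F : I -> {set X}) :
  (forall i j, i != j -> [disjoint F i & F j]) ->
  \sum_i meas mu (F i) <= meas mu [set: X].
Proof.
by move=> F_disj; rewrite /meas -partition_disjoint_bigcup // le_meas ?subsetT.
Qed.

End Measure.

Section Levels.
Variables (R : realType) (X : finType) (f : X -> R) (mu : X -> R) (Df : X -> X) (eps : R).
Hypothesis mu_ge0 : forall x, 0 <= mu x.

Local Notation dlevel := (dlevel f Df eps).
Local Notation p1 := (p1 f mu Df eps).
Local Notation p2 := (p2 f mu Df eps).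
Local Notation qq := (qq f mu Df eps).

Lemma dlevel_disjoint (A : {set X}) (j k : nat) :
  j != k -> [disjoint dlevel A j & dlevel A k].
Proof.
move=> neq_jk; apply/pred0P => x /=; apply/negbTE; rewrite !inE.
apply/negP => /andP[/andP[stop_j before_j] /andP[stop_k before_k]].
case: ltngtP neq_jk => // [lt_jk|lt_kj] _.
- by move/forallP: before_k => /(_ (Ordinal lt_jk)); rewrite !inE stop_j.
- by move/forallP: before_j => /(_ (Ordinal lt_kj)); rewrite !inE stop_k.
Qed.

Lemma sum_meas_dlevel_le1 (A : {set X}) (n : nat) :
  \sum_(x : X) mu x = 1 -> \sum_(0 <= j < n) meas mu (dlevel A j) <= 1.
Proof.
move=> mu1; rewrite big_mkord.
have meas_setT : meas mu [set: X] = 1.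
  by rewrite -mu1; apply: eq_bigl => x; rewrite finset.in_setT.
rewrite -meas_setT; apply: sum_meas_disjoint => // i j.
exact: dlevel_disjoint.
Qed.

Lemma Stop_setT : Stop f Df eps [set: X] = Stop f Df eps (~: Fix Df).
Proof.
by rewrite /Stop finset.setCT finset.setU0 finset.setCK finset.setUAC finset.setUid.
Qed.

Lemma dlevel_setT (j : nat) : dlevel [set: X] j = dlevel (~: Fix Df) j.
Proof. by rewrite /dlevel Stop_setT. Qed.

Lemma qq_setT (j : nat) : qq [set: X] j = qq (~: Fix Df) j.
Proof. by rewrite /qq dlevel_setT. Qed.

Lemma p2_setT (j : nat) : p2 [set: X] j = 0.
Proof. by apply: big1 => x; rewrite !inE andbF. Qed.

Lemma p2_Fix_le_p1_setT (j : nat) : p2 (~: Fix Df) j <= p1 [set: X] j.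
Proof.
apply: le_meas => //; rewrite dlevel_setT.
by apply/fintype.subsetP => x; rewrite !inE andbT => /andP[].
Qed.

Lemma p1_add_qq_setT (j : nat) :
  p1 [set: X] j + qq [set: X] j = meas mu (dlevel [set: X] j).
Proof.
rewrite -(measID mu _ (Wset Df (Lset f eps))) addrC /p1 /qq finset.setIC.
by congr (_ + meas mu _); apply/setP => x; rewrite !inE andbT andbC.
Qed.

End Levels.

Section CriticalExponent.
Variables (R : realType) (X : finType) (f : X -> R) (mu : X -> R) (Df : X -> X) (eps : R).

Local Notation a_idx := (a_idx f mu Df eps).
Local Notation b_idx := (b_idx f mu Df eps).
Local Notation p1 := (p1 f mu Df eps).
Local Notation p2 := (p2 f mu Df eps).
Local Notation qq := (qq f mu Df eps).
Local Notation Qfun := (Qfun f mu Df eps).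
Local Notation xi_crit := (xi_crit f mu Df eps).

Definition random_search_weight : R :=
  \sum_(0 <= j < (a_idx [set: X]).+1) p1 [set: X] j
  + \sum_(0 <= j < maxn (a_idx [set: X]) (b_idx [set: X])) qq [set: X] j.+1.

Lemma Qfun_setT_p0 (xi : R) :
  Qfun [set: X] 0 xi = 1 - expR xi * random_search_weight.
Proof.
rewrite /Qfun subr0 mul0r subr0 divr1 mul1r.
under [X in _ - expR xi * X - _]eq_bigr do rewrite p2_setT !mul0r.
under [X in _ - _ * X]eq_bigr do rewrite sum_expr0 p2_setT addr0 mul0r expR0 mulr1.
rewrite big1_eq big_nat_recl //= !mulr0 add0r subr0.
under [X in _ - _ * X]eq_bigr do rewrite mulr1.
by rewrite /random_search_weight mulrDr opprD addrA.
Qed.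

Lemma Qfun_p1 (A : {set X}) (xi : R) :
  Qfun A 1 xi = 1 - \sum_(0 <= j < (a_idx A).+1) p2 A j * expR xi ^+ j.+1.
Proof.
rewrite /Qfun subrr !mul0r !subr0 big_distrr; congr (1 - _).
by apply: eq_bigr => j _; rewrite expr1n mulr1 expRM_natl exprS mulrCA.
Qed.

Lemma xi_crit_cases (A : {set X}) (p : R) :
  xi_crit A p = 0 \/ 0 < xi_crit A p /\ Qfun A p (xi_crit A p) = 0.
Proof.
rewrite /xi_crit; case: ifP => _.
- case: (pselect (exists xi, 0 < xi /\ Qfun A p xi = 0)) => [root|no_root].
  + by right; apply: xgetPex root.
  + by left; apply: xgetPN => xi root; apply: no_root; exists xi.
- case: (pselect (exists xi, 0 < xi /\ (p = 0 \/ xi < - ln p) /\ Qfun A p xi = 0))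
    => [root|no_root].
  + by right; have [? [_ ?]] := xgetPex 0 root.
  + by left; apply: xgetPN => xi root; apply: no_root; exists xi.
Qed.

Lemma xi_crit_ge0 (A : {set X}) (p : R) : 0 <= xi_crit A p.
Proof. by case: (xi_crit_cases A p) => [->|[/ltW]]. Qed.

Lemma xi_crit_p0 (A : {set X}) (xi : R) : 0 < xi -> Qfun A 0 xi = 0 ->
  0 < xi_crit A 0 /\ Qfun A 0 (xi_crit A 0) = 0.
Proof.
move=> xi_gt0 Q_xi; have [xi0_eq0|//] := xi_crit_cases A 0.
exfalso; move: xi0_eq0; rewrite /xi_crit; case: ifP => _.
- have root : exists y, 0 < y /\ Qfun A 0 y = 0 by exists xi.
  by have [+ _] := xgetPex 0 root => /[swap] ->; rewrite ltxx.
- have root : exists y, 0 < y /\ (0 = 0 :> R \/ y < - ln 0) /\ Qfun A 0 y = 0.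
    by exists xi; split => //; split => //; left.
  by have [+ _] := xgetPex 0 root => /[swap] ->; rewrite ltxx.
Qed.

End CriticalExponent.

Section RandomSearchVersusDescent.
Variables (R : realType) (X : finType) (f : X -> R) (mu : X -> R) (Df : X -> X) (eps : R).
Hypothesis mu_ge0 : forall x, 0 <= mu x.

Local Notation a_idx := (a_idx f mu Df eps).
Local Notation b_idx := (b_idx f mu Df eps).
Local Notation p1 := (p1 f mu Df eps).
Local Notation p2 := (p2 f mu Df eps).
Local Notation qq := (qq f mu Df eps).
Local Notation Qfun := (Qfun f mu Df eps).
Local Notation xi_crit := (xi_crit f mu Df eps).
Local Notation s := (random_search_weight f mu Df eps).

Lemma a_idx_le_card (A : {set X}) : (a_idx A <= #|X|)%N.
Proof. by apply/bigmax_leqP => i _; rewrite -ltnS. Qed.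

Lemma p2_gt0_of_Qfun_p1_root (A : {set X}) (xi : R) : Qfun A 1 xi = 0 ->
  exists2 j, (j <= a_idx A)%N & 0 < p2 A j.
Proof.
rewrite Qfun_p1 => /eqP; rewrite subr_eq0 eq_sym => /eqP p2_eq1.
have : \sum_(0 <= j < (a_idx A).+1) p2 A j * expR xi ^+ j.+1 != 0.
  by rewrite p2_eq1 oner_neq0.
rewrite psumr_neq0 => [/hasP[k]|k _]; last first.
  by rewrite mulr_ge0 ?exprn_ge0 ?expR_ge0 ?meas_ge0.
rewrite mem_index_iota ltnS /= => k_le.
by rewrite pmulr_lgt0 ?exprn_gt0 ?expR_gt0 // => p2k_gt0; exists k.
Qed.

Lemma random_search_weight_gt0 (xi : R) : Qfun (~: Fix Df) 1 xi = 0 -> 0 < s.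
Proof.
move=> /p2_gt0_of_Qfun_p1_root[j j_le p2_gt0].
have p1_gt0 : 0 < p1 [set: X] j.
  exact: lt_le_trans p2_gt0 (p2_Fix_le_p1_setT f Df eps mu_ge0 j).
have j_lt : (j < #|X|.+1)%N by rewrite ltnS (leq_trans j_le (a_idx_le_card _)).
have j_in : j \in index_iota 0 (a_idx [set: X]).+1.
  rewrite mem_index_iota ltnS.
  apply: (leq_bigmax_cond (F := fun i : 'I_#|X|.+1 => nat_of_ord i) (Ordinal j_lt)).
  by rewrite /= p1_gt0.
apply: (lt_le_trans p1_gt0); rewrite -[p1 _ j]addr0.
apply: lerD; last by apply: sumr_ge0 => i _; apply: meas_ge0.
rewrite (bigD1_seq j) ?iota_uniq //= lerDl.
by apply: sumr_ge0 => i _; apply: meas_ge0.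
Qed.

Lemma random_search_weight_add_qq0_le1 :
  \sum_(x : X) mu x = 1 -> s + qq [set: X] 0 <= 1.
Proof.
move=> mu1; set m := maxn (a_idx [set: X]) (b_idx [set: X]).
have p1_le : \sum_(0 <= j < (a_idx [set: X]).+1) p1 [set: X] j
    <= \sum_(0 <= j < m.+1) p1 [set: X] j.
  by apply: nondecreasing_series; [move=> *; apply: meas_ge0 | rewrite ltnS leq_maxl].
have qq_eq : \sum_(0 <= j < m.+1) qq [set: X] j
    = qq [set: X] 0 + \sum_(0 <= j < m) qq [set: X] j.+1 by rewrite big_nat_recl.
have := sum_meas_dlevel_le1 f Df eps mu_ge0 [set: X] m.+1 mu1.
under eq_bigr do rewrite -p1_add_qq_setT.
rewrite big_split /= qq_eq /random_search_weight -/m.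
lra.
Qed.

Lemma expR_mul_random_search_weight_le1 (xi : R) :
  \sum_(x : X) mu x = 1 ->
  1 <= \sum_(0 <= j < (a_idx (~: Fix Df)).+1)
         p2 (~: Fix Df) j / (1 - qq (~: Fix Df) 0) ^+ j.+1 ->
  Qfun (~: Fix Df) 1 xi = 0 -> expR xi * s <= 1.
Proof.
move=> mu1 p2_ge1 Q_root; have s_gt0 := random_search_weight_gt0 Q_root.
move: Q_root; rewrite Qfun_p1 => /eqP; rewrite subr_eq0 eq_sym => /eqP p2_eq1.
have p2_ge0 j : 0 <= p2 (~: Fix Df) j by apply: meas_ge0.
have s_q0_le1 := random_search_weight_add_qq0_le1 mu1.
rewrite -qq_setT in p2_ge1.
have e_d_le1 : expR xi * (1 - qq [set: X] 0) <= 1.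
  by apply: (power_sums_mul_le1 p2_ge0 (expR_gt0 xi) _ p2_eq1 p2_ge1); lra.
apply: le_trans e_d_le1; rewrite ler_pM2l ?expR_gt0 //; lra.
Qed.

Lemma xi_crit_random_search : 0 < s < 1 -> xi_crit [set: X] 0 = - ln s.
Proof.
case/andP=> s_gt0 s_lt1.
have Q_root : Qfun [set: X] 0 (- ln s) = 0.
  by rewrite Qfun_setT_p0 expRN lnK ?posrE // mulVf ?subrr // gt_eqF.
have ln_gt0 : 0 < - ln s by rewrite oppr_gt0 ln_lt0 // s_gt0.
have [_] := xi_crit_p0 ln_gt0 Q_root.
rewrite Qfun_setT_p0 => /eqP; rewrite subr_eq0 eq_sym => /eqP es_eq1.
apply: expR_inj; rewrite expRN lnK ?posrE //.
by apply: (mulIf (lt0r_neq0 s_gt0)); rewrite es_eq1 mulVf // lt0r_neq0.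
Qed.

End RandomSearchVersusDescent.

Local Open Scope classical_set_scope.

Theorem theorem2 (R : realType) (X : finType) (f : X -> R) (mu : X -> R)
  (N : X -> {set X}) (Df : X -> X) (eps : R) :
  (* min_X f = 0 *)
  (forall x, 0 <= f x) -> (exists x, f x = 0) ->
  (* mu is a probability measure on X *)
  (forall x, 0 <= mu x) -> \sum_(x : X) mu x = 1 ->
  (* Df x in argmin_{y in N(x)} f y *)
  (forall x, Df x \in N x /\ (forall y, y \in N x -> f (Df x) <= f y)) ->
  (* eps in f(X), eps < max_X f *)
  (exists x, f x = eps) -> (exists x, eps < f x) ->
  1 <= \sum_(0 <= j < (a_idx f mu Df eps (~: Fix Df)).+1)
         p2 f mu Df eps (~: Fix Df) j
           / (1 - qq f mu Df eps (~: Fix Df) 0%N) ^+ j.+1 ->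
  ((xi_crit f mu Df eps (~: Fix Df) 1)%:E <=
     ereal_sup [set (xi_crit f mu Df eps [set: X] p)%:E | p in [set p : R | (0 <= p < 1)%R]])%E.
Proof.
move=> _ _ mu_ge0 mu1 _ _ _ p2_ge1.
suff xi_le : xi_crit f mu Df eps (~: Fix Df) 1 <= xi_crit f mu Df eps [set: X] 0.
  apply: le_trans (ereal_sup_ubound _); last by exists 0; rewrite //= lexx ltr01.
  by rewrite lee_fin.
have [->|[xi_gt0 Q_root]] := xi_crit_cases f mu Df eps (~: Fix Df) 1.
  exact: xi_crit_ge0.
have es_le1 := expR_mul_random_search_weight_le1 mu_ge0 mu1 p2_ge1 Q_root.
set s := random_search_weight f mu Df eps in es_le1 *.
have s_gt0 : 0 < s := random_search_weight_gt0 mu_ge0 Q_root.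
have s_lt1 : s < 1.
  by apply: lt_le_trans es_le1; rewrite ltr_pMl // expR_gt1.
rewrite xi_crit_random_search ?s_gt0 // -ler_expR expRN lnK ?posrE //.
by rewrite -(ler_pM2r s_gt0) mulVf ?lt0r_neq0.
Qed.
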